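(* Let $(X,d)$ be a compact metric space and $f_{0,\infty}=\{f_n\}_{n=0}^\infty$ an equi-continuous sequence of continuous self-maps of $X$. Then \[h^{*}(f_{0,\infty}^{n})=h^{*}(f_{0,\infty}),\quad n\geq1.\]
   Context: $f_{0,\infty}$ is equi-continuous if for every $\epsilon>0$ there is $\delta>0$ with $d(x,y)<\delta\Rightarrow d(f_n x,f_n y)<\epsilon$ for all $n$. $f_i^n=f_{i+n-1}\circ\cdots\circ f_i$, $f_i^0=\mathrm{id}$. The $n$-th compositions system is $f_{0,\infty}^n=\{f_{kn}^n\}_{k=0}^\infty$, i.e. the maps $f_{kn+n-1}\circ\cdots\circ f_{kn}$, $k\ge0$. $\mathcal S$ is the set of strictly increasing sequences $A=\{a_i\}_{i\ge1}$ of nonnegative integers. For a sequence $g_{0,\infty}$ of continuous self-maps, $h_A(g_{0,\infty})=\sup_{\mathscr A}\limsup_{m\to\infty}\frac1m\log\mathcal N(\bigvee_{i=1}^m (g_0^{a_i})^{-1}\mathscr A)$ over finite open covers $\mathscr A$ ($\bigvee$ = common refinement, $\mathcal N$ = minimal cardinality of a subcover), and $h^*(g_{0,\infty})=\sup_{A\in\mathcal S}h_A(g_{0,\infty})$. *)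

From HB Require Import structures.
From mathcomp Require Import all_boot all_order all_algebra.
From mathcomp Require Import all_classical all_reals all_analysis.
Set Implicit Arguments. Unset Strict Implicit. Unset Printing Implicit Defensive.
Import Order.TTheory GRing.Theory Num.Theory.
Local Open Scope classical_set_scope.
Local Open Scope ring_scope.

Section Defs.
Context {R : realType} {X : metricType R}.

Fixpoint comp_seq (f : nat -> X -> X) (i n : nat) : X -> X :=
  match n with
  | 0 => id
  | n'.+1 => f (i + n')%N \o comp_seq f i n'
  end.

(* the n-th compositions system f_{0,oo}^n = {f_{kn}^n}_{k>=0} *)
Definition nth_comp_system (f : nat -> X -> X) (n : nat) : nat -> X -> X :=
  fun k => comp_seq f (k * n) n.

Definition equicontinuous_seq (f : nat -> X -> X) : Prop :=
  forall e : R, 0 < e -> exists2 d : R, 0 < d &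
    forall x y : X, mdist x y < d -> forall n, mdist (f n x) (f n y) < e.

Definition finite_open_cover (k : nat) (U : 'I_k -> set X) : Prop :=
  (forall i, open (U i)) /\ (forall x : X, exists i, U i x).

(* the family F (indexed by J) has a subcover of cardinality (at most) m *)
Definition has_subcover_of_size (J : Type) (F : J -> set X) (m : nat) : Prop :=
  exists idx : 'I_m -> J, forall x : X, exists i, F (idx i) x.

Definition Ncov (J : Type) (F : J -> set X) : R :=
  inf [set (m%:R : R) | m in has_subcover_of_size F].

(* \bigvee_{i=1}^m (g_0^{a_i})^{-1} U, indexed by choices 'I_m -> 'I_k *)
Definition join_preimages (g : nat -> X -> X) (a : nat -> nat) (m k : nat)
    (U : 'I_k -> set X) : ('I_m -> 'I_k) -> set X :=
  fun phi => [set x | forall i : 'I_m, U (phi i) (comp_seq g 0 (a i) x)].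

Definition h_A_cover (g : nat -> X -> X) (a : nat -> nat) (k : nat)
    (U : 'I_k -> set X) : \bar R :=
  limn_esup (fun m : nat =>
    ((ln (Ncov (@join_preimages g a m k U))) / (m%:R))%:E).

Definition h_A (g : nat -> X -> X) (a : nat -> nat) : \bar R :=
  ereal_sup [set h_A_cover g a (projT2 U) | U in
     [set U : {k : nat & 'I_k -> set X} | finite_open_cover (projT2 U)]
     ] .

Definition strictly_increasing (a : nat -> nat) : Prop :=
  forall i j, (i < j)%N -> (a i < a j)%N.

Definition seq_entropy (g : nat -> X -> X) : \bar R :=
  ereal_sup [set h_A g a | a in strictly_increasing].

End Defs.

From HB Require Import structures.
From mathcomp Require Import all_boot all_order all_algebra.
From mathcomp Require Import all_classical all_reals all_analysis.
Set Implicit Arguments. Unset Strict Implicit. Unset Printing Implicit Defensive.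
Import Order.TTheory GRing.Theory Num.Theory.
Local Open Scope classical_set_scope.
Local Open Scope ring_scope.

(* The inequality h*(f^n) <= h*(f) is formal: the joined cover for f^n along
   B is the joined cover for f along nB, and nB is strictly increasing.
   Conversely, let A be strictly increasing and write a_i = q_i n + r_i with
   r_i < n.  Compactness and equicontinuity give, for a finite open cover U, a
   finite open cover V by small balls each of which lies in (f_p^r)^{-1} U_u
   for some u, uniformly in p and r < n.  Let B enumerate increasingly the
   values of the nondecreasing unbounded sequence q; each q_i equals some b_j
   with j <= i, so each member of the m-fold join of V along B for f^n lies in
   a member of the m-fold join of U along A for f.  Hence the covering numbers
   compare and h_A(f, U) <= h_B(f^n, V) <= h*(f^n). *)

Lemma strict_enum_nondecreasing (q : nat -> nat) :
  {homo q : i j / (i <= j)%N} -> (forall v, exists i, (v < q i)%N) ->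
  exists2 b : nat -> nat, strictly_increasing b &
    forall i, exists2 j, (j <= i)%N & b j = q i.
Proof.
move=> q_homo q_unb.
pose next v := q (ex_minn (q_unb v)).
pose b := fix b j := if j is j'.+1 then next (b j') else q 0%N.
have b_lt j : (b j < b j.+1)%N by rewrite /= /next; case: ex_minnP.
exists b; first exact: homo_ltn ltn_trans b_lt.
elim=> [|i [j le_ji bj]]; first by exists 0%N.
have [->|qNE] := eqVneq (q i.+1) (q i); first by exists j; rewrite ?leqW.
exists j.+1 => //.
have q_lt : (q i < q i.+1)%N by rewrite ltn_neqAle eq_sym qNE q_homo.
rewrite /= -/b bj /next; case: ex_minnP => m q_m m_min.
suff -> : m = i.+1 by [].
apply/eqP; rewrite eqn_leq m_min //= ltnNge; apply/negP => /q_homo.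
by rewrite leqNgt q_m.
Qed.

(* [compact_cover] is stated for pointed spaces only. *)
Definition pointed_at (T : topologicalType) (t : T) : Type := T.

Section pointed_at.
Variables (T : topologicalType) (t : T).
HB.instance Definition _ := Topological.copy (pointed_at t) T.
HB.instance Definition _ := isPointed.Build (pointed_at t) t.
End pointed_at.

Lemma compact_cover_compact (T : topologicalType) (A : set T) :
  compact A -> cover_compact A.
Proof.
have [[t _]|T0] := pselect (exists t : T, True).
  move=> cA; suff : @cover_compact (pointed_at t) A by [].
  by rewrite -compact_cover.
by move=> _ I D F _ _; exists finmap.fset0 => // x; exfalso; apply: T0; exists x.
Qed.

Section metric_covers.
Context {R : realType} {X : metricType R}.

Lemma equicontinuous_comp_seq (f : nat -> X -> X) : equicontinuous_seq f ->
  forall N e, 0 < e -> exists2 d, 0 < d & forall x y : X, mdist x y < d ->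
    forall p r, (r < N)%N -> mdist (comp_seq f p r x) (comp_seq f p r y) < e.
Proof.
move=> ef; elim=> [|N IH] e e0; first by exists 1.
have [d1 d1_gt0 fd1] := ef e e0.
have [d2 d2_gt0 IHd2] := IH d1 d1_gt0.
exists (Num.min e d2) => [|x y]; first by rewrite lt_min e0 d2_gt0.
rewrite lt_min => /andP[xye xyd2] p [_|r] //=.
by rewrite ltnS => rN; apply: fd1; exact: IHd2.
Qed.

Definition refines (I J : Type) (F : I -> set X) (G : J -> set X) :=
  forall i, exists j, F i `<=` G j.

Hypothesis compactX : compact [set: X].

Lemma finite_ball_cover (e : R) : 0 < e ->
  exists k (c : 'I_k -> X), finite_open_cover (fun j => (ball (c j) e)°).
Proof.
move=> e0.
have := compact_cover_compact compactX => /(_ X setT (fun c => (ball c e)°)).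
case=> [c _|x _|D _ DX].
- exact: open_interior.
- by exists x => //; exact: nbhsx_ballx.
pose s := finmap.enum_fset D.
exists (size s), (fun j => tnth (in_tuple s) j); split=> [j|x].
  exact: open_interior.
have [c /= cD xc] := DX x I.
exists (Ordinal (elimT idP (eqbRL (index_mem c s) cD))).
by rewrite (tnth_nth c) /= nth_index.
Qed.

Lemma lebesgue_number k (U : 'I_k -> set X) : finite_open_cover U ->
  exists2 d : R, 0 < d & forall y, exists i, forall z, mdist y z < d -> U i z.
Proof.
move=> [Uo Uc].
have near_U x : [set: X] x -> \forall x' \near x & d \near (0:R)^'+,
    exists i, forall z, mdist x' z < d -> U i z.
  move=> _; have [i Uix] := Uc x.
  have /nbhs_ballP[r /= r0] : nbhs x (U i) by move: (Uo i); rewrite openE; apply.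
  rewrite ballEmdist => xrU; near=> x' d; exists i => z x'z; apply: xrU => /=.
  rewrite (le_lt_trans (metric_triangle _ x' _)) // (splitr r) ltrD //.
    near: x'; have := @near_ball _ _ x (r / 2) (divr_gt0 r0 (ltr0Sn _ 1)).
    by rewrite ballEmdist.
  apply: (lt_le_trans x'z) => /=; near: d.
  by apply: nbhs_right_le; exact: divr_gt0.
have := proj1 (compact_near_coveringP _) compactX.
move=> /(_ R (0:R)^'+ _ _ near_U) U_near.
have [d [d0 Ud]] := filter_ex (filterI (nbhs_right_gt (0:R)) U_near).
by exists d => // y; apply: Ud.
Unshelve. all: by end_near.
Qed.

Lemma cover_refining_comp_seq (f : nat -> X -> X) n k (U : 'I_k -> set X) :
  equicontinuous_seq f -> finite_open_cover U ->
  exists k' (V : 'I_k' -> set X), finite_open_cover V /\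
    forall p r, (r < n)%N -> refines V (fun i => comp_seq f p r @^-1` U i).
Proof.
move=> ef Ucover.
have [d d_gt0 Ud] := lebesgue_number Ucover.
have [e e_gt0 fe] := equicontinuous_comp_seq ef n d_gt0.
have [k' [c Vcover]] := finite_ball_cover e_gt0.
exists k', (fun j => (ball (c j) e)°); split => // p r rn j.
have [i Ui] := Ud (comp_seq f p r (c j)).
exists i => x /interior_subset; rewrite ballEmdist /= => cx.
exact/Ui/fe.
Qed.

End metric_covers.

Section covering_numbers.
Context {R : realType} {X : metricType R}.

Lemma subcover_refines (I J : Type) (F : I -> set X) (G : J -> set X) m :
  refines F G -> has_subcover_of_size F m -> has_subcover_of_size G m.
Proof.
move=> FG [idx Fidx]; have [g Fg] := fin_all_exists (fun t => FG (idx t)).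
by exists g => x; have [t Ft] := Fidx x; exists t; exact: Fg.
Qed.

Lemma le_Ncov_refines (I J : Type) (F : I -> set X) (G : J -> set X) :
  refines F G -> (exists m, has_subcover_of_size F m) -> Ncov G <= Ncov F.
Proof.
move=> FG [M FM]; apply: lb_le_inf; first by exists M%:R, M.
move=> _ [m Fm <-]; apply: ge_inf; first by exists 0 => _ [? _ <-].
by exists m => //; exact: subcover_refines Fm.
Qed.

Lemma Ncov_ge1 (x : X) (J : Type) (F : J -> set X) :
  (exists m, has_subcover_of_size F m) -> 1 <= Ncov F.
Proof.
move=> [M FM]; apply: lb_le_inf; first by exists M%:R, M.
move=> _ [m [idx Fidx] <-]; have [t _] := Fidx x.
by rewrite ler1n (leq_ltn_trans (leq0n t) (ltn_ord t)).
Qed.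

Lemma Ncov_le0 (J : Type) (F : J -> set X) : (X -> False) -> Ncov F <= 0.
Proof.
move=> X0; apply: ge_inf; first by exists 0 => _ [? _ <-].
have idx : 'I_0 -> J by case.
by exists 0%N => //; exists idx => x; case: (X0 x).
Qed.

Lemma le_ln_Ncov_refines (I J : Type) (F : I -> set X) (G : J -> set X) :
  refines F G -> (exists m, has_subcover_of_size F m) ->
  ln (Ncov G) <= ln (Ncov F).
Proof.
move=> FG Fsub; have [[x _]|X0] := pselect (exists x : X, True).
  have Gsub : exists m, has_subcover_of_size G m.
    by case: Fsub => m /(subcover_refines FG); exists m.
  have G_ge1 := Ncov_ge1 x Gsub; have GF := le_Ncov_refines FG Fsub.
  by rewrite ler_ln ?posrE ?(lt_le_trans ltr01) // (le_trans G_ge1).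
by rewrite !ln0 ?Ncov_le0 // => x; apply: X0; exists x.
Qed.

Lemma join_preimages_subcover g a m k (U : 'I_k -> set X) :
  (forall x, exists i, U i x) ->
  exists M, has_subcover_of_size (join_preimages g a (m:=m) U) M.
Proof.
move=> Ucover; exists #|{ffun 'I_m -> 'I_k}|.
exists (fun t i => (enum_val t : {ffun 'I_m -> 'I_k}) i) => x.
have [phi phiP] := fin_all_exists (fun i : 'I_m => Ucover (comp_seq g 0 (a i) x)).
by exists (enum_rank [ffun i => phi i]) => i /=; rewrite enum_rankK ffunE.
Qed.

Lemma le_limn_esup (u v : nat -> \bar R) :
  (forall m, (u m <= v m)%E) -> (limn_esup u <= limn_esup v)%E.
Proof.
move=> uv; apply: le_ereal_inf_tmp => _ [V FV <-].
apply: ereal_inf_le; exists (ereal_sup (u @` V)); first by exists V.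
apply: ge_ereal_sup => _ [m Vm <-].
by apply: le_trans (uv m) _; apply: ereal_sup_ubound; exists m.
Qed.

Lemma le_h_A_cover g1 a1 k1 (U1 : 'I_k1 -> set X) g2 a2 k2 (U2 : 'I_k2 -> set X) :
  (forall m, ln (Ncov (join_preimages g1 a1 (m:=m) U1))
              <= ln (Ncov (join_preimages g2 a2 (m:=m) U2))) ->
  (h_A_cover g1 a1 U1 <= h_A_cover g2 a2 U2)%E.
Proof.
move=> le12; apply: le_limn_esup => m; rewrite lee_fin.
by apply: ler_wpM2r; rewrite ?invr_ge0.
Qed.

End covering_numbers.

Section nth_comp_system.
Context {R : realType} {X : metricType R}.
Variable f : nat -> X -> X.

Lemma comp_seqD i s t x :
  comp_seq f i (s + t) x = comp_seq f (i + s) t (comp_seq f i s x).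
Proof. by elim: t => [|t IH]; rewrite ?addn0 // addnS /= IH addnA. Qed.

Lemma comp_seq_nth_comp_system n q x :
  comp_seq (nth_comp_system f n) 0 q x = comp_seq f 0 (q * n) x.
Proof.
elim: q => [|q IH] //=.
by rewrite IH /nth_comp_system add0n mulSn addnC comp_seqD add0n.
Qed.

Lemma h_A_nth_comp_system n b :
  h_A (nth_comp_system f n) b = h_A f (fun j => b j * n)%N.
Proof.
have join_eq m k (U : 'I_k -> set X) :
    join_preimages (nth_comp_system f n) b (m:=m) U =
    join_preimages f (fun j => b j * n)%N (m:=m) U.
  apply/funext => phi; apply/seteqP; split => x /= x_phi i;
  by have := x_phi i; rewrite comp_seq_nth_comp_system.
rewrite /h_A; congr ereal_sup; apply: eq_imagel => -[k U] _.
by rewrite /h_A_cover; congr limn_esup; apply/funext => m; rewrite join_eq.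
Qed.

Lemma seq_entropy_nth_comp_system_le n : (0 < n)%N ->
  (seq_entropy (nth_comp_system f n) <= seq_entropy f)%E.
Proof.
move=> n_gt0; apply: ge_ereal_sup => _ [b b_incr <-].
rewrite h_A_nth_comp_system; apply: ereal_sup_ubound.
by exists (fun j => b j * n)%N => // i j ij; rewrite ltn_pmul2r // b_incr.
Qed.

Lemma join_nth_comp_system_refines n (a b : nat -> nat) m
    k (U : 'I_k -> set X) k' (V : 'I_k' -> set X) :
  (0 < n)%N ->
  (forall p r, (r < n)%N -> refines V (fun i => comp_seq f p r @^-1` U i)) ->
  (forall i, exists2 j, (j <= i)%N & b j = (a i %/ n)%N) ->
  refines (join_preimages (nth_comp_system f n) b (m:=m) V)
          (join_preimages f a (m:=m) U).
Proof.
move=> n_gt0 VU ba psi.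
suff /fin_all_exists[phi phiP] : forall i : 'I_m, exists u : 'I_k,
    join_preimages (nth_comp_system f n) b V psi
    `<=` [set x | U u (comp_seq f 0 (a i) x)].
  by exists phi => x x_psi i; exact: phiP.
(* f_0^{a_i} = f_{b_j n}^{a_i mod n} o (f^n)_0^{b_j} with b_j = a_i / n. *)
move=> i; have [j le_ji bj] := ba i.
have jm : (j < m)%N := leq_ltn_trans le_ji (ltn_ord i).
have [u Vu] := VU (b j * n)%N (a i %% n)%N (ltn_pmod _ n_gt0) (psi (Ordinal jm)).
exists u => x /(_ (Ordinal jm)) /Vu /=; rewrite comp_seq_nth_comp_system.
by have := comp_seqD 0 (b j * n) (a i %% n) x; rewrite add0n bj -divn_eq => <-.
Qed.

Lemma h_A_le_seq_entropy_nth_comp_system n a :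
  compact [set: X] -> equicontinuous_seq f -> (0 < n)%N ->
  strictly_increasing a -> (h_A f a <= seq_entropy (nth_comp_system f n))%E.
Proof.
move=> compactX ef n_gt0 a_incr.
apply: ge_ereal_sup => _ [[k U] /= Ucover <-].
have [k' [V [Vcover VU]]] := cover_refining_comp_seq compactX n ef Ucover.
have [b b_incr ba] : exists2 b, strictly_increasing b &
    forall i, exists2 j, (j <= i)%N & b j = (a i %/ n)%N.
  apply: strict_enum_nondecreasing => [i j|v].
    by rewrite leq_eqVlt => /predU1P[->//|/a_incr/ltnW]; exact: leq_div2r.
  have a_ge i : (i <= a i)%N.
    by elim: i => // i IH; exact: leq_ltn_trans IH (a_incr _ _ (ltnSn i)).
  by exists (v.+1 * n)%N; apply: leq_trans (leq_div2r n (a_ge _)); rewrite mulnK.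
apply: (@le_trans _ _ (h_A (nth_comp_system f n) b)).
  apply: (@le_trans _ _ (h_A_cover (nth_comp_system f n) b V)); last first.
    by apply: ereal_sup_ubound; exists (existT _ k' V).
  apply: le_h_A_cover => m; apply: le_ln_Ncov_refines.
    exact: join_nth_comp_system_refines n_gt0 VU ba.
  by apply: join_preimages_subcover; case: Vcover.
by apply: ereal_sup_ubound; exists b.
Qed.

Lemma seq_entropy_le_nth_comp_system n :
  compact [set: X] -> equicontinuous_seq f -> (0 < n)%N ->
  (seq_entropy f <= seq_entropy (nth_comp_system f n))%E.
Proof.
move=> compactX ef n_gt0; apply: ge_ereal_sup => _ [a a_incr <-].
exact: h_A_le_seq_entropy_nth_comp_system compactX ef n_gt0 a_incr.
Qed.

End nth_comp_system.

Theorem theorem4p4 (R : realType) (X : metricType R) (f : nat -> X -> X) :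
  compact [set: X] ->
  (forall n, continuous (f n)) ->
  equicontinuous_seq f ->
  forall n : nat, (1 <= n)%N -> seq_entropy (nth_comp_system f n) = seq_entropy f.
Proof.
(* Continuity of each map is implied by equicontinuity. *)
move=> compactX _ ef n n_gt0; apply: le_anti; apply/andP; split.
  exact: (seq_entropy_nth_comp_system_le f n_gt0).
exact: (seq_entropy_le_nth_comp_system compactX ef n_gt0).
Qed.
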